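(* Let $\mathcal{L}$ be a finite bounded distributive lattice and let $\mathcal{A}$ be an $\mathcal{L}$-$\mathcal{VL}$-algebra. Let $X=\mathrm{Hom}_{\mathcal{VA}_{\mathcal{L}}}(\mathcal{A},\mathcal{L})$ and, for $a\in\mathcal{A}$, let $\langle a\rangle=\{v\in X: v(a)=1\}$. Let $\sigma_1$ be the topology on $X$ generated by the basis $B^{\sigma_1}=\{\langle a\rangle : a\in\mathcal{A}\}$ and $\sigma_2$ the topology generated by the basis $B^{\sigma_2}=\{X\setminus O: O\in B^{\sigma_1}\}$. Then $(X,\sigma_1,\sigma_2)$ is a pairwise Boolean space.
   Context: $\mathcal{L}$ is a finite bounded distributive lattice, hence a Heyting algebra. An $\mathcal{L}$-$\mathcal{VL}$-algebra is a structure $(\mathcal{A},\wedge,\vee,\to,(T_\ell)_{\ell\in\mathcal{L}},0,1)$, with unary operations $T_\ell$, such that for all $\ell,\ell_1,\ell_2\in\mathcal{L}$ and $a,b\in\mathcal{A}$: (i) $(\mathcal{A},\wedge,\vee,\to,0,1)$ is a Heyting algebra; (ii) $T_{\ell_1}(a)\wedge T_{\ell_2}(b)\le T_{\ell_1\to\ell_2}(a\to b)\wedge T_{\ell_1\wedge\ell_2}(a\wedge b)\wedge T_{\ell_1\vee\ell_2}(a\vee b)$ and $T_{\ell_2}(a)\le T_{T_{\ell_1}(\ell_2)}(T_{\ell_1}(a))$; (iii) $T_0(0)=1$, $T_\ell(0)=0$ for $\ell\neq0$, $T_1(1)=1$, $T_\ell(1)=0$ for $\ell\ne1$; (iv) $\bigvee_{\ell\in\mathcal{L}}T_\ell(a)=1$,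 $T_\ell(a)\vee(T_\ell(a)\to0)=1$, and $T_{\ell_1}(a)\wedge T_{\ell_2}(a)=0$ for $\ell_1\ne\ell_2$; (v) $T_1(T_\ell(a))=T_\ell(a)$, $T_0(T_\ell(a))=T_\ell(a)\to0$, $T_{\ell_2}(T_{\ell_1}(a))=0$ for $\ell_2\neq0,1$; (vi) $T_1(a)\le a$, $T_1(a\wedge b)=T_1(a)\wedge T_1(b)$; (vii) $\bigwedge_{\ell\in\mathcal{L}}(T_\ell(a)\leftrightarrow T_\ell(b))\le(a\leftrightarrow b)$. $\mathcal{L}$ itself is regarded as an $\mathcal{L}$-$\mathcal{VL}$-algebra with its Heyting operations and $T_\ell(x)=1$ if $x=\ell$, $T_\ell(x)=0$ otherwise. $\mathcal{VA}_{\mathcal{L}}$ is the category of $\mathcal{L}$-$\mathcal{VL}$-algebras and homomorphisms preserving all operations. A bitopological space $(S,\tau_1,\tau_2)$ is: pairwise Hausdorff if for distinct $s_1,s_2$ there are disjoint $O_1\in\tau_1$, $O_2\in\tau_2$ with $s_1\in O_1$, $s_2\in O_2$; pairwise zero-dimensional if the sets that are $\tau_1$-open and $\tau_2$-closed form a basis of $\tau_1$ and the sets that are $\tau_2$-open and $\tau_1$-closed form a basis of $\tau_2$; pairwise compact if every cover of $S$ by sets in $\tau_1\cup\tau_2$ has a finite subcover. A pairwise Boolean space is one that is pairwise Hausdorff, pairwise zero-dimensional and pairwise compact. *)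

From HB Require Import structures.
From mathcomp Require Import all_boot all_order.
Set Implicit Arguments. Unset Strict Implicit. Unset Printing Implicit Defensive.
Import Order.TTheory.
Local Open Scope order_scope.

Section VL.
Variables (dL : Order.disp_t) (L : finTBDistrLatticeType dL).

Definition impL (x y : L) : L := \join_(z : L | z `&` x <= y) z.

Definition TL (l x : L) : L := if x == l then \top else \bot.

Variables (d : Order.disp_t) (A : tbDistrLatticeType d).
Variables (impA : A -> A -> A) (T : L -> A -> A).

Definition iffA (a b : A) : A := impA a b `&` impA b a.

Definition is_VL_algebra : Prop :=
  (* (i) Heyting algebra: impA is the relative pseudocomplement *)
  (forall a b c : A, (c <= impA a b) = (c `&` a <= b)) /\
  (forall (l1 l2 : L) (a b : A),
      T l1 a `&` T l2 b <=
        T (impL l1 l2) (impA a b) `&` T (l1 `&` l2) (a `&` b) `&` T (l1 `|` l2) (a `|` b)) /\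
  (forall (l1 l2 : L) (a : A), T l2 a <= T (TL l1 l2) (T l1 a)) /\
  T \bot \bot = \top /\ (forall l : L, l != \bot -> T l \bot = \bot) /\
  T \top \top = \top /\ (forall l : L, l != \top -> T l \top = \bot) /\
  (forall a : A, \join_(l : L) T l a = \top) /\
  (forall (l : L) (a : A), T l a `|` impA (T l a) \bot = \top) /\
  (forall (l1 l2 : L) (a : A), l1 != l2 -> T l1 a `&` T l2 a = \bot) /\
  (forall (l : L) (a : A), T \top (T l a) = T l a) /\
  (forall (l : L) (a : A), T \bot (T l a) = impA (T l a) \bot) /\
  (forall (l1 l2 : L) (a : A), l2 != \bot -> l2 != \top -> T l2 (T l1 a) = \bot) /\
  (forall a : A, T \top a <= a) /\
  (forall a b : A, T \top (a `&` b) = T \top a `&` T \top b) /\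
  (forall a b : A, \meet_(l : L) iffA (T l a) (T l b) <= iffA a b).

Definition is_VL_hom (v : A -> L) : Prop :=
  (forall a b, v (a `&` b) = v a `&` v b) /\
  (forall a b, v (a `|` b) = v a `|` v b) /\
  (forall a b, v (impA a b) = impL (v a) (v b)) /\
  (forall l a, v (T l a) = TL l (v a)) /\
  v \bot = \bot /\ v \top = \top.

Definition HomAL : Type := {v : A -> L | is_VL_hom v}.

Definition basic_open (a : A) : HomAL -> Prop := fun v => proj1_sig v a = \top.

End VL.

Section Topo.
Variable S : Type.

Inductive gen_open (B : (S -> Prop) -> Prop) : (S -> Prop) -> Prop :=
| go_basic U : B U -> gen_open B U
| go_full : gen_open B (fun _ => True)
| go_inter U V : gen_open B U -> gen_open B V -> gen_open B (fun x => U x /\ V x)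
| go_union (F : (S -> Prop) -> Prop) :
    (forall U, F U -> gen_open B U) -> gen_open B (fun x => exists U, F U /\ U x)
| go_ext U V : gen_open B U -> (forall x, U x <-> V x) -> gen_open B V.

Variables (tau1 tau2 : (S -> Prop) -> Prop).

Definition closed_in (tau : (S -> Prop) -> Prop) (F : S -> Prop) : Prop :=
  tau (fun x => ~ F x).

Definition pairwise_Hausdorff : Prop :=
  forall s1 s2 : S, s1 <> s2 ->
    exists O1 O2, tau1 O1 /\ tau2 O2 /\ O1 s1 /\ O2 s2 /\ (forall x, ~ (O1 x /\ O2 x)).

Definition clopen_basis (taui tauj : (S -> Prop) -> Prop) : Prop :=
  forall (U : S -> Prop) (x : S), taui U -> U x ->
    exists W, taui W /\ closed_in tauj W /\ W x /\ (forall y, W y -> U y).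

Definition pairwise_zero_dimensional : Prop :=
  clopen_basis tau1 tau2 /\ clopen_basis tau2 tau1.

Definition pairwise_compact : Prop :=
  forall C : (S -> Prop) -> Prop,
    (forall U, C U -> tau1 U \/ tau2 U) ->
    (forall x, exists U, C U /\ U x) ->
    exists (n : nat) (f : 'I_n -> (S -> Prop)),
      (forall i, C (f i)) /\ (forall x, exists i, f i x).

Definition pairwise_Boolean : Prop :=
  pairwise_Hausdorff /\ pairwise_zero_dimensional /\ pairwise_compact.

End Topo.

Arguments basic_open [dL L d A] impA T a _.
Arguments is_VL_algebra [dL L d A] impA T.
Arguments is_VL_hom [dL L d A] impA T v.

Definition sigma1 dL (L : finTBDistrLatticeType dL) d (A : tbDistrLatticeType d)
  (impA : A -> A -> A) (T : L -> A -> A) : (HomAL impA T -> Prop) -> Prop :=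
  gen_open (fun U => exists a : A, U = basic_open impA T a).

Definition sigma2 dL (L : finTBDistrLatticeType dL) d (A : tbDistrLatticeType d)
  (impA : A -> A -> A) (T : L -> A -> A) : (HomAL impA T -> Prop) -> Prop :=
  gen_open (fun U => exists a : A, U = (fun v => ~ basic_open impA T a v)).
Arguments sigma1 [dL L d A] impA T _.
Arguments sigma2 [dL L d A] impA T _.

(* Evaluation v |-> (v a)_(a in A) embeds X = Hom(A, L) into the product L^A of
   finite discrete spaces. Each homomorphism condition constrains at most three
   coordinates, so X is closed in L^A and hence compact by Tychonoff. Both basic
   families <a> and X \ <a> are open in this product topology, so a cover of X by
   sigma1- and sigma2-open sets is an open cover of a compact space. Points v, w
   with l = v(a) <> w(a) are separated by <T_l a> and its complement, because
   v(T_l a) = 1 and w(T_l a) = 0; and the basis of each sigma_i consists of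
   complements of basic sets of the other topology. *)
From HB Require Import structures.
From mathcomp Require Import all_boot all_order.
From mathcomp Require Import all_classical topology_structure compact.
From mathcomp Require Import discrete_topology function_spaces finmap.
Import Order.TTheory ArrowAsProduct.
Set Implicit Arguments. Unset Strict Implicit. Unset Printing Implicit Defensive.

Local Open Scope classical_set_scope.

Section GeneratedTopology.
Variable S : Type.
Implicit Types (B : (S -> Prop) -> Prop) (U V : S -> Prop).

Lemma gen_open0 B : gen_open B (fun _ => False).
Proof.
apply: (go_ext (@go_union _ B (fun _ => False) (fun U => False_ind _))).
by move=> x; split=> [[U [[]]]|[]].
Qed.

Lemma gen_openU B U V : gen_open B U -> gen_open B V ->
  gen_open B (fun x => U x \/ V x).
Proof.
move=> oU oV.
have oUV W : W = U \/ W = V -> gen_open B W by case=> ->.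
apply: (go_ext (go_union oUV)) => x.
by split=> [[W [[->|->] Wx]]|[Ux|Vx]];
  [left|right|exists U; split; [left|]|exists V; split; [right|]].
Qed.

Lemma clopen_basis_gen B1 B2 :
  (forall U, B1 U -> gen_open B2 (fun x => ~ U x)) ->
  clopen_basis (gen_open B1) (gen_open B2).
Proof.
move=> closedB U x oU; elim: oU x => [V B1V||V W _ IV _ IW|F _ IF|V W _ IV eVW] x.
- by move=> Vx; exists V; do !split=> //; [exact: go_basic|exact: closedB].
- move=> _; exists (fun _ => True); do !split=> //; first exact: go_full.
  by apply: (go_ext (gen_open0 B2)) => y; split=> // [[]].
- move=> [/IV[V' [oV' [cV' [V'x sV']]]] /IW[W' [oW' [cW' [W'x sW']]]]].
  exists (fun y => V' y /\ W' y); split; first exact: go_inter.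
  split.
    apply: (go_ext (gen_openU cV' cW')) => y.
    exact: iff_sym (not_andP _ _).
  by split=> [|y [/sV' ? /sW' ?]]; split.
- move=> [V [FV /(IF V FV)[W [oW [cW [Wx sW]]]]]].
  by exists W; do 3!split=> //; move=> y /sW; exists V.
- move=> /eVW /IV[W' [oW' [cW' [W'x sW']]]].
  by exists W'; do 3!split=> //; move=> y /sW' /eVW.
Qed.

Variables (P : ptopologicalType) (e : S -> P).

Definition coarser_than_initial (tau : (S -> Prop) -> Prop) :=
  forall U, tau U -> forall s, U s ->
    exists O : set P, open O /\ O (e s) /\ forall y, O (e y) -> U y.

Lemma gen_open_coarser B :
  coarser_than_initial B -> coarser_than_initial (gen_open B).
Proof.
move=> cB U oU; elim: oU => [V /cB //||V W _ IV _ IW|F _ IF|V W _ IV eVW] s.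
- by move=> _; exists setT; split; [exact: openT|split].
- move=> [/IV[O1 [o1 [s1 h1]]] /IW[O2 [o2 [s2 h2]]]].
  exists (O1 `&` O2); split; first exact: openI.
  by split=> [|y [/h1 ? /h2 ?]]; split.
- move=> [V [FV /(IF V FV)[O [oO [Os sO]]]]].
  by exists O; do 2!split=> //; move=> y /sO; exists V.
- move=> /eVW /IV[O [oO [Os sO]]].
  by exists O; do 2!split=> //; move=> y /sO /eVW.
Qed.

Lemma pairwise_compact_coarser tau1 tau2 : compact (range e) ->
  coarser_than_initial tau1 -> coarser_than_initial tau2 ->
  pairwise_compact tau1 tau2.
Proof.
move=> ce c1 c2 C oC coverC.
pose trace (U : S -> Prop) : set P :=
  \bigcup_(O in [set O : set P | open O /\ forall y, O (e y) -> U y]) O.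
move: ce; rewrite (@compact_cover P) => /(_ _ C trace) [].
- by move=> U _; apply: bigcup_open => O [].
- move=> _ [s _ <-]; have [U [CU Us]] := coverC s.
  exists U => //.
  have [O [oO [Os sO]]] :
      exists O : set P, open O /\ O (e s) /\ forall y, O (e y) -> U y.
    by case: (oC U CU) => [/c1|/c2]; apply.
  by exists O.
move=> D sDC coverD.
exists (size D), (fun i : 'I_(size D) => nth set0 D i); split.
  by move=> i; rewrite -in_setE; apply/sDC/mem_nth.
move=> x; have [U DU [O [_ sO] Ox]] := coverD _ (ex_intro2 _ _ x I erefl).
have iU : index U D < size D by rewrite index_mem.
by exists (Ordinal iU) => /=; rewrite nth_index //; apply: sO.
Qed.

End GeneratedTopology.

Section HomSpace.
Variables (dL : Order.disp_t) (L : finTBDistrLatticeType dL)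
  (d : Order.disp_t) (A : tbDistrLatticeType d)
  (impA : A -> A -> A) (T : L -> A -> A).

Local Open Scope order_scope.
Local Notation X := (HomAL impA T).
Local Notation is_hom := (is_VL_hom impA T).

Lemma HomAL_ext (v w : X) : (forall a, proj1_sig v a = proj1_sig w a) -> v = w.
Proof. by case: v w => [f hf] [g hg] /= fg; apply: eq_exist; exact: funext. Qed.

Lemma is_VL_hom_local (f : A -> L) :
  (forall x y z : A, exists g,
     [/\ g x = f x, g y = f y, g z = f z & is_hom g]) -> is_hom f.
Proof.
move=> near; split; [|split; [|split; [|split; [|split]]]].
- move=> a b; have [g [<- <- <- [gI _]]] := near (a `&` b) a b; exact: gI.
- move=> a b; have [g [<- <- <- [_ [gU _]]]] := near (a `|` b) a b; exact: gU.
- move=> a b; have [g [<- <- <- [_ [_ [gimp _]]]]] := near (impA a b) a b.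
  exact: gimp.
- move=> l a; have [g [<- <- _ [_ [_ [_ [gT _]]]]]] := near (T l a) a a.
  exact: gT.
- by have [g [<- _ _ [_ [_ [_ [_ [g0 _]]]]]]] := near \bot \bot \bot.
- by have [g [<- _ _ [_ [_ [_ [_ [_ g1]]]]]]] := near \top \top \top.
Qed.

(* The discrete topology is only available on pointed types. *)
Definition Lpointed : Type := L.
HB.instance Definition _ := Choice.on Lpointed.
HB.instance Definition _ := isPointed.Build Lpointed \bot.
Definition Ldiscrete := discrete_topology Lpointed.
HB.instance Definition _ := Pointed.on Ldiscrete.
HB.instance Definition _ := Topological.on Ldiscrete.

Definition valuation_space := forall a : A, Ldiscrete.
HB.instance Definition _ := Pointed.on valuation_space.
HB.instance Definition _ := Topological.on valuation_space.

Definition valuation (v : X) : valuation_space := proj1_sig v.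

Lemma range_valuation : range valuation = [set f : valuation_space | is_hom f].
Proof.
apply/seteqP; split=> [_ [v _ <-]|f hf]; first exact: (proj2_sig v).
by exists (exist _ f hf).
Qed.

Lemma open_coord (a : A) (Q : set Ldiscrete) :
  open [set f : valuation_space | Q (f a)].
Proof.
apply: (@open_comp _ Ldiscrete (proj a)); last exact: discrete_open.
by move=> f _; exact: proj_continuous.
Qed.

Lemma closed_VL_hom : closed [set f : valuation_space | is_hom f].
Proof.
rewrite -openC openE => f /= nhf.
have [x [y [z nearf]]] : exists x y z, forall g : valuation_space,
    g x = f x -> g y = f y -> g z = f z -> ~ is_hom g.
  apply: contrapT => nnear; apply: nhf; apply: is_VL_hom_local => x y z.
  apply: contrapT => nexg; apply: nnear; exists x, y, z => g gx gy gz hg.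
  by apply: nexg; exists g.
pose O := [set g : valuation_space | g x = f x] `&`
  ([set g : valuation_space | g y = f y] `&` [set g : valuation_space | g z = f z]).
have oO : open O.
  apply: openI; first exact: (open_coord x (eq^~ (f x))).
  apply: openI; first exact: (open_coord y (eq^~ (f y))).
  exact: (open_coord z (eq^~ (f z))).
apply: (@filterS _ _ _ O); first by move=> g [gx [gy gz]]; exact: nearf.
exact: open_nbhs_nbhs.
Qed.

Lemma compact_VL_hom : compact [set f : valuation_space | is_hom f].
Proof.
apply: (@subclosed_compact _ _ setT closed_VL_hom) => //.
have -> : [set: valuation_space] = [set f | forall a, [set: Ldiscrete] (f a)].
  by apply/seteqP; split.
apply: (@tychonoff A (fun=> Ldiscrete) (fun=> setT)) => a.
exact: (@finite_compact Ldiscrete setT (@finite_finset L setT)).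
Qed.

Lemma sigma_pairwise_compact :
  pairwise_compact (sigma1 impA T) (sigma2 impA T).
Proof.
apply: (@pairwise_compact_coarser _ _ valuation).
- by rewrite range_valuation; exact: compact_VL_hom.
- apply: gen_open_coarser => _ [a ->] v va.
  exists [set f : valuation_space | f a = \top].
  by split; [exact: (open_coord a (eq^~ \top))|].
- apply: gen_open_coarser => _ [a ->] v nva.
  exists [set f : valuation_space | f a <> \top].
  by split; [exact: (open_coord a (fun t => t <> \top))|].
Qed.

Lemma sigma_pairwise_zero_dimensional :
  pairwise_zero_dimensional (sigma1 impA T) (sigma2 impA T).
Proof.
split; apply: clopen_basis_gen => _ [a ->]; first by apply: go_basic; exists a.
apply: (go_ext (go_basic (ex_intro _ a erefl))) => v.
exact: iff_sym (not_notP _).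
Qed.

Lemma sigma_pairwise_Hausdorff :
  pairwise_Hausdorff (sigma1 impA T) (sigma2 impA T).
Proof.
move=> v w vw.
have [a vwa] : exists a, proj1_sig v a <> proj1_sig w a.
  apply: contrapT => nex; apply/vw/HomAL_ext => a.
  by apply: contrapT => nva; apply: nex; exists a.
have bot_neq_top : (\bot : L) <> \top.
  move=> bt; apply: vwa.
  have trivL (x : L) : x = \bot by apply/eqP; rewrite eq_le le0x andbT bt lex1.
  by rewrite [LHS]trivL [RHS]trivL.
set l := proj1_sig v a.
have [_ [_ [_ [vT _]]]] := proj2_sig v.
have [_ [_ [_ [wT _]]]] := proj2_sig w.
exists (basic_open impA T (T l a)), (fun u => ~ basic_open impA T (T l a) u).
split; first by apply: go_basic; exists (T l a).
split; first by apply: go_basic; exists (T l a).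
rewrite /basic_open vT wT /TL eqxx.
have /negPf -> : proj1_sig w a != l by apply/eqP => wl; apply: vwa.
by do 2!split=> //; move=> u [].
Qed.

End HomSpace.

Theorem lemma1 (dL : Order.disp_t) (L : finTBDistrLatticeType dL)
  (d : Order.disp_t) (A : tbDistrLatticeType d)
  (impA : A -> A -> A) (T : L -> A -> A)
  (HA : is_VL_algebra impA T) :
  pairwise_Boolean (sigma1 impA T) (sigma2 impA T).
Proof.
split; first exact: sigma_pairwise_Hausdorff.
split; first exact: sigma_pairwise_zero_dimensional.
exact: sigma_pairwise_compact.
Qed.
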